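(* Let $T$ be a tree of order $n\ge 2$ and let $X\in\mathbb R^{V(T)}$ be a vector all of whose entries are non-negative, or all of whose entries are non-positive. Label the vertices $v_1,\dots,v_n$ of $T$ so that $|X_{v_1}|\ge |X_{v_2}|\ge\cdots\ge |X_{v_n}|$, and write $X_i=X_{v_i}$. Then $$\sum_{uv\in E(T)}X_uX_v\ \le\ \sum_{i=2}^n X_1X_i ,$$ where the right-hand side equals $\sum_{uv\in E(K_{1,n-1})}X_uX_v$ for the star $K_{1,n-1}$ on the same vertex set with center $v_1$. If moreover all entries of $X$ are positive (or all are negative) and $|X_1|>|X_2|$, then equality holds only if $T$ is the star $K_{1,n-1}$ with center $v_1$.
   Context: $K_{1,n-1}$ denotes the star of order $n$; its vertex of degree $n-1$ is called the center. *)

From HB Require Import structures.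
From mathcomp Require Import all_boot all_order all_algebra.
Set Implicit Arguments. Unset Strict Implicit. Unset Printing Implicit Defensive.
Import Order.TTheory GRing.Theory Num.Theory.

Definition simple_graph (T : finType) (e : rel T) : Prop :=
  symmetric e /\ irreflexive e.

Definition connected (T : finType) (e : rel T) : Prop :=
  forall x y : T, connect e x y.

Definition acyclic (T : finType) (e : rel T) : Prop :=
  forall c : seq T, cycle e c -> uniq c -> size c < 3.

Definition is_tree (T : finType) (e : rel T) : Prop :=
  [/\ simple_graph e, connected e & acyclic e].

Definition edges (T : finType) (e : rel T) : {set {set T}} :=
  [set E : {set T} | [exists u, exists v, e u v && (E == [set u; v])]].

Definition star_edges (T : finType) (c : T) : {set {set T}} :=
  [set [set c; u] | u in [set~ c]].

Definition edge_sum (R : realFieldType) (T : finType) (E : {set {set T}})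
    (X : T -> R) : R :=
  (\sum_(F in E) \prod_(x in F) X x)%R.

From HB Require Import structures.
From mathcomp Require Import all_boot all_order all_algebra.
Import Order.TTheory GRing.Theory Num.Theory.
Set Implicit Arguments. Unset Strict Implicit.

(* Root the tree T at the vertex r = v_1 of largest |X|.  Every
   vertex w <> r has a unique parent par w (its neighbour on the path to r), and
   the edges of T are exactly the pairs {w, par w}, w <> r.  Hence
     sum_{uv in E(T)} X_u X_v = sum_{w <> r} X_w X_{par w}
                              <= sum_{w <> r} X_w X_r,
   since all products X_a X_b are non-negative and |X_{par w}| <= |X_r|; the
   right-hand side is the edge sum of the star centred at r.  If equality holds
   and no X_w vanishes, then |X_{par w}| = |X_r| for every w, so par w = r
   whenever |X_r| is strictly larger than all other |X_v|: T is the star. *)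

Section RootedTree.
Variables (T : finType) (e : rel T).
Hypothesis esym : symmetric e.
Hypothesis eirr : irreflexive e.
Hypothesis econ : connected e.
Hypothesis eacy : acyclic e.
Variable r : T.

Definition del_vertex (w : T) : rel T := [rel x y | e x y && (x != w) && (y != w)].

Lemma del_vertex_sym w : symmetric (del_vertex w).
Proof. by move=> x y; rewrite /del_vertex /= esym andbAC. Qed.

Lemma del_vertex_sub w : subrel (del_vertex w) e.
Proof. by move=> x y /= /andP[/andP[]]. Qed.

Lemma path_del_vertex w x s :
  path e x s -> w \notin x :: s -> path (del_vertex w) x s.
Proof.
elim: s x => [//|y s IH] x /= /andP[exy ps].
rewrite !inE !negb_or => /and3P[wx wy ws].
rewrite /del_vertex /= exy eq_sym wx eq_sym wy /=.
by apply: IH => //; rewrite inE negb_or wy.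
Qed.

Lemma path_del_vertex_notin w x s : path (del_vertex w) x s -> w \notin s.
Proof.
elim: s x => [//|y s IH] x /= /andP[/andP[/andP[_ _] yw] ps].
by rewrite inE negb_or eq_sym yw (IH y).
Qed.

Lemma del_vertex_connect_from w x y :
  connect (del_vertex w) x y -> x = y \/ x != w.
Proof.
case/connectP => [[|z q]] /=; first by move=> _ ->; left.
by move=> /andP[/andP[/andP[_ xw] _] _] _; right.
Qed.

Lemma uniq_path_to x y : exists p, [/\ path e x p, last x p = y & uniq (x :: p)].
Proof.
have /connectP[p ep ->] := econ x y.
by case: (shortenP ep) => p' ep' up' _; exists p'.
Qed.

(* Acyclicity: two neighbours of w that remain connected after deleting w
   coincide (otherwise w and the path between them would form a cycle). *)
Lemma neighbours_separated w a b :
  e w a -> e w b -> connect (del_vertex w) a b -> a = b.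
Proof.
move=> ewa ewb /connectP[q pq eb]; move: eb.
case: (shortenP pq) => q' pq' uq' _ eb; subst b.
case: (eqVneq a (last a q')) => // neq; exfalso.
have hc : cycle e (w :: a :: q').
  rewrite /cycle rcons_path /= ewa (sub_path (@del_vertex_sub w) pq') /=.
  by rewrite esym.
have hu : uniq (w :: a :: q').
  rewrite cons_uniq uq' andbT inE negb_or (path_del_vertex_notin pq') andbT.
  by apply/eqP => wa; move: ewa; rewrite wa eirr.
have := eacy hc hu.
by case: q' {ewb pq' uq' hc hu pq} neq => [|z q'] /=; rewrite ?eqxx.
Qed.

Definition is_parent w a := e w a && connect (del_vertex w) r a.

Lemma is_parent_exists w : w != r -> exists a, is_parent w a.
Proof.
move=> wr; have [p [ep lp up]] := uniq_path_to r w.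
case/lastP: p ep lp up => [|q z] ep lp up; first by move: wr; rewrite -lp /= eqxx.
rewrite last_rcons in lp; subst z.
move: ep; rewrite rcons_path => /andP[eq ew].
exists (last r q); rewrite /is_parent esym ew /=.
apply/connectP; exists q => //; apply: path_del_vertex => //.
by move: up; rewrite -rcons_cons rcons_uniq => /andP[].
Qed.

Lemma is_parent_uniq w a b : is_parent w a -> is_parent w b -> a = b.
Proof.
move=> /andP[ewa ca] /andP[ewb cb]; apply: (neighbours_separated ewa ewb).
by apply: connect_trans cb; rewrite (sym_connect_sym (@del_vertex_sym w)).
Qed.

(* The parent of w in the tree rooted at r (arbitrary for w = r). *)
Definition par w := odflt r [pick a | is_parent w a].

Lemma par_is_parent w : w != r -> is_parent w (par w).
Proof.
move=> wr; rewrite /par; case: pickP => [a //|/= h].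
by have [a] := is_parent_exists wr; rewrite h.
Qed.

Lemma par_neq w : w != r -> w != par w.
Proof.
move=> /par_is_parent /andP[ew _].
by apply/eqP => h; move: ew; rewrite -h eirr.
Qed.

Lemma edge_par u v : e u v -> (u != r /\ v = par u) \/ (v != r /\ u = par v).
Proof.
move=> euv.
have uv : u != v by apply/eqP => h; move: euv; rewrite h eirr.
case: (boolP (connect (del_vertex v) r u)) => [c|nc].
  have vr : v != r.
    apply/eqP => vr; subst v.
    case: (del_vertex_connect_from c) => [ru|]; last by rewrite eqxx.
    by move: uv; rewrite ru eqxx.
  right; split => //; apply: (@is_parent_uniq v); last exact: par_is_parent.
  by rewrite /is_parent esym euv c.
have ur : u != r by apply/eqP => ur; move: nc; rewrite ur connect0.
left; split => //; apply: (@is_parent_uniq u); last exact: par_is_parent.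
rewrite /is_parent euv /=.
have [p [ep lp up]] := uniq_path_to r v.
case: (boolP (u \in r :: p)) => [ui|un]; last first.
  by apply/connectP; exists p => //; apply: path_del_vertex.
(* The path from r to v passes through u; its prefix up to u avoids v. *)
exfalso; move: nc; apply/negP/negPn.
case/splitPl: ui ep lp up => p1 p2 lp1.
rewrite cat_path last_cat lp1 => /andP[ep1 _] lp2 up.
apply/connectP; exists p1; last by rewrite lp1.
apply: path_del_vertex => //; apply/negP => vin.
have : v \in u :: p2 by rewrite -lp2 mem_last.
rewrite inE => /orP[/eqP vu|vp2]; first by move: uv; rewrite vu eqxx.
move: up; rewrite -cat_cons cat_uniq => /and3P[_ /hasPn h _].
by move: (h v vp2); rewrite vin.
Qed.

Lemma tree_edges_par : edges e = [set [set w; par w] | w in [set~ r]].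
Proof.
apply/setP => F; apply/idP/idP.
  rewrite inE => /existsP[u /existsP[v /andP[euv /eqP ->]]].
  case: (edge_par euv) => [[ur ->]|[vr ->]].
    by apply/imsetP; exists u; rewrite // in_setC1.
  by apply/imsetP; exists v; rewrite ?in_setC1 // setUC.
case/imsetP => w; rewrite in_setC1 => wr ->.
rewrite inE; apply/existsP; exists w; apply/existsP; exists (par w).
by case/andP: (par_is_parent wr) => -> _; rewrite eqxx.
Qed.

End RootedTree.

Local Open Scope ring_scope.

Section EdgeSums.
Variables (R : realFieldType) (T : finType) (X : T -> R).

Lemma edge_weight u v : u != v -> \prod_(x in [set u; v]) X x = X u * X v.
Proof. by move=> uv; rewrite big_setU1 ?big_set1 // in_set1. Qed.

Lemma star_edge_sum c :
  edge_sum (star_edges c) X = \sum_(w in [set~ c]) X c * X w.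
Proof.
rewrite /edge_sum /star_edges big_imset /=.
  by apply: eq_bigr => u; rewrite in_setC1 => uc; rewrite edge_weight // eq_sym.
move=> u v; rewrite !in_setC1 => uc vc /setP /(_ u).
by rewrite !inE eqxx orbT (negbTE uc) /= => /esym /eqP.
Qed.

(* From here on all products X a * X b are non-negative (X has constant sign). *)
Hypothesis X_sign : forall a b, 0 <= X a * X b.

Lemma mul_normE a b : X a * X b = `|X a| * `|X b|.
Proof. by rewrite -normrM ger0_norm. Qed.

(* Merging the terms of a sum indexed by w that give the same edge {w, f w}
   only loses non-negative terms. *)
Lemma edge_sum_imset_le (A : {set T}) (f : T -> T) :
  (forall w, w \in A -> w != f w) ->
  edge_sum [set [set w; f w] | w in A] X <= \sum_(w in A) X w * X (f w).
Proof.
move=> hf; rewrite /edge_sum.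
rewrite [leRHS](partition_big (fun w => [set w; f w])
   (fun F => F \in [set [set w; f w] | w in A])); last by move=> w wA; apply: imset_f.
apply: ler_sum => F /imsetP[w0 w0A ->].
rewrite [leRHS](bigD1 w0) /=; last by rewrite eqxx andbT.
by rewrite edge_weight ?hf // lerDl; apply: sumr_ge0 => w _.
Qed.

Variable r : T.
Hypothesis r_max : forall v, `|X v| <= `|X r|.

Lemma term_le_star w u : X w * X u <= X r * X w.
Proof.
by rewrite !mul_normE [`|X r| * _]mulrC ler_wpM2l.
Qed.

Lemma partner_sum_le_star (A : {set T}) (f : T -> T) :
  \sum_(w in A) X w * X (f w) <= \sum_(w in A) X r * X w.
Proof. by apply: ler_sum => w _; apply: term_le_star. Qed.

Lemma partner_sum_eq_star (A : {set T}) (f : T -> T) :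
  (forall w, X w != 0) ->
  \sum_(w in A) X w * X (f w) = \sum_(w in A) X r * X w ->
  forall w, w \in A -> X (f w) = X r.
Proof.
move=> X_neq0 heq w wA.
have /eqP : X r * X w - X w * X (f w) = 0.
  apply: (@psumr_eq0P _ _ (mem A) (fun w => X r * X w - X w * X (f w))) => //.
    by move=> x _; rewrite subr_ge0 term_le_star.
  by rewrite sumrB heq subrr.
by rewrite subr_eq0 mulrC => /eqP /(mulfI (X_neq0 w)).
Qed.

End EdgeSums.

Section Labelling.
Variables (R : realFieldType) (T : finType) (X : T -> R) (n : nat).
Variable lab : 'I_n.+2 -> T.
Hypothesis lab_bij : bijective lab.
Hypothesis lab_mono : forall i j : 'I_n.+2, (i <= j)%N -> `|X (lab j)| <= `|X (lab i)|.

Lemma first_label_max v : `|X v| <= `|X (lab ord0)|.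
Proof.
case: lab_bij => lab' _ labK'; rewrite -(labK' v); exact: lab_mono.
Qed.

Lemma second_label_max v : v != lab ord0 -> `|X v| <= `|X (lab (inord 1))|.
Proof.
case: lab_bij => lab' _ labK' vr; rewrite -(labK' v); apply: lab_mono.
rewrite inordK // lt0n; apply: contra vr => /eqP h0.
by rewrite -{1}(labK' v); apply/eqP; congr lab; apply: val_inj.
Qed.

Lemma label_sumE (F : T -> R) :
  \sum_(i < n.+2 | i != ord0) F (lab i) = \sum_(v in [set~ lab ord0]) F v.
Proof.
case: lab_bij => lab' labK _.
rewrite (reindex lab); last exact: onW_bij.
by apply: eq_bigl => i; rewrite in_setC1 (inj_eq (can_inj labK)).
Qed.

End Labelling.

(* Order of the tree is n.+2 (i.e. any order >= 2); vertices are labelled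
   v_1..v_{n+2} by the bijection lab : 'I_(n.+2) -> T (v_{i+1} = lab i). *)
Theorem lemma3p1 (R : realFieldType) (T : finType) (e : rel T) (n : nat)
  (X : T -> R) (lab : 'I_n.+2 -> T) :
  is_tree e ->
  ((forall v, 0 <= X v) \/ (forall v, X v <= 0)) ->
  bijective lab ->
  (forall i j : 'I_n.+2, (i <= j)%N -> `|X (lab j)| <= `|X (lab i)|) ->
  edge_sum (edges e) X <= \sum_(i < n.+2 | i != ord0) X (lab ord0) * X (lab i)
  /\ (\sum_(i < n.+2 | i != ord0) X (lab ord0) * X (lab i)
        = edge_sum (star_edges (lab ord0)) X)
  /\ (((forall v, 0 < X v) \/ (forall v, X v < 0)) ->
      `|X (lab (inord 1))| < `|X (lab ord0)| ->
      edge_sum (edges e) X = \sum_(i < n.+2 | i != ord0) X (lab ord0) * X (lab i) ->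
      edges e = star_edges (lab ord0)).
Proof.
move=> [[esym eirr] econ eacy] hsign lab_bij lab_mono.
set r := lab ord0; set A := [set~ r]; set f := par e r.
have X_sign a b : 0 <= X a * X b.
  by case: hsign => h; [apply: mulr_ge0|apply: mulr_le0].
have r_max := first_label_max lab_bij lab_mono.
have f_neq w : w \in A -> w != f w by rewrite in_setC1; apply: par_neq.
have E := tree_edges_par esym eirr econ eacy r.
have le_edges := edge_sum_imset_le X_sign f_neq.
have le_star := partner_sum_le_star X_sign r_max A f.
rewrite (label_sumE lab_bij (fun v => X r * X v)) -/r -/A E.
split; first exact: le_trans le_edges le_star.
split; first by rewrite star_edge_sum.
move=> hstrict hgap heq.
have X_neq0 w : X w != 0.
  by case: hstrict => h; [rewrite gt_eqF ?h|rewrite lt_eqF ?h].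
have f_eq : \sum_(w in A) X w * X (f w) = \sum_(w in A) X r * X w.
  by apply: le_anti; rewrite le_star -heq le_edges.
have f_root w : w \in A -> f w = r.
  move=> wA; apply: contraTeq hgap => fr.
  rewrite -(partner_sum_eq_star X_sign r_max X_neq0 f_eq wA) -leNgt.
  exact: second_label_max lab_bij lab_mono _ fr.
by apply: eq_in_imset => w wA; rewrite -/f f_root // setUC.
Qed.
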